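(* Let $a_1,a_2>0$, $e_1,e_2\in[0,1)$, and let $K,L,M,N$ be the real numbers defined in the context. For $u_2\in\mathbb{R}$ define \[ \begin{split} \lambda &= a_1e_1^2,\\ \mu &= a_2\sqrt{1-e_1^2}\Bigl(\sqrt{1-e_2^2}\,N\sin u_2 + L\cos u_2 - e_2 L\Bigr),\\ \nu &= a_2e_2K - a_1e_1 - a_2\sqrt{1-e_2^2}\,M\sin u_2 - a_2K\cos u_2,\\ \alpha &= a_1\Bigl(\sqrt{1-e_2^2}\,M\cos u_2 - K\sin u_2\Bigr),\\ \beta &= a_1\sqrt{1-e_1^2}\Bigl(\sqrt{1-e_2^2}\,N\cos u_2 - L\sin u_2\Bigr),\\ \gamma &= a_2e_2^2\sin u_2\cos u_2 - a_1e_1\sqrt{1-e_2^2}\,M\cos u_2 + (a_1e_1K - a_2e_2)\sin u_2, \end{split} \] and let \[ \mathscr{S}(u_2) = \begin{pmatrix} \alpha^2+\beta^2 & 0 & -\alpha\lambda & 0\\ 2\alpha\gamma & \alpha^2+\beta^2 & \beta\mu - \lambda\gamma-\alpha\nu & -\alpha\lambda\\ \gamma^2-\beta^2 & 2\alpha\gamma & -\gamma\nu & \beta\mu-\lambda\gamma-\alpha\nu\\ 0 &\gamma^2-\beta^2 & 0 &-\gamma\nu \end{pmatrix} \] (the Sylvester matrix, with respect to $\cos u_1$, of the two polynomials $(\alpha^2+\beta^2)\cos^2 u_1 + 2\alpha\gamma\cos u_1 + \gamma^2-\beta^2$ and $- \alpha\lambda\cos^2 u_1 + (\beta\mu - \lambda\gamma-\alpha\nu)\cos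 u_1 -\gamma\nu$). Then $\det\mathscr{S}(u_2)$ contains the factor $\beta^2$: there is a polynomial $P$ in $\alpha,\beta,\gamma,\lambda,\mu,\nu$ (hence a trigonometric polynomial $g(u_2)$ in $\cos u_2,\sin u_2$) such that $\det\mathscr{S}(u_2)=\beta(u_2)^2\, g(u_2)$ for all $u_2$.
   Context: Two confocal elliptic orbits $\mathcal{E}_1,\mathcal{E}_2$ are given by Keplerian elements $a_i$ (semimajor axis), $e_i$ (eccentricity), $i_i$ (inclination), $\Omega_i$ (longitude of node), $\omega_i$ (argument of pericenter), $i=1,2$. Define the unit vectors $\mathcal{P}=(\cos\omega_1\cos\Omega_1-\cos i_1\sin\omega_1\sin\Omega_1,\ \cos\omega_1\sin\Omega_1+\cos i_1\sin\omega_1\cos\Omega_1,\ \sin\omega_1\sin i_1)$, $\mathcal{Q}=(-\sin\omega_1\cos\Omega_1-\cos i_1\cos\omega_1\sin\Omega_1,\ -\sin\omega_1\sin\Omega_1+\cos i_1\cos\omega_1\cos\Omega_1,\ \cos\omega_1\sin i_1)$, and $\mathfrak{p},\mathfrak{q}$ by the same formulas with $(i_2,\Omega_2,\omega_2)$ in place of $(i_1,\Omega_1,\omega_1)$. Set $K=\langle\mathcal{P},\mathfrak{p}\rangle$, $L=\langle\mathcal{Q},\mathfrak{p}\rangle$, $M=\langle\mathcal{P},\mathfrak{q}\rangle$, $N=\langle\mathcal{Q},\mathfrak{q}\rangle$. Here $u_1,u_2$ are the eccentric anomalies on the two orbits. *)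

From HB Require Import structures.
From mathcomp Require Import all_boot all_algebra.
From mathcomp Require Import Rstruct.
From mathcomp Require Import mpoly.
From Stdlib Require Import Reals.

Set Implicit Arguments.
Unset Strict Implicit.
Unset Printing Implicit Defensive.
Import GRing.Theory.
Local Open Scope ring_scope.

(* Unit vectors P, Q of an orbit with angles (i, Om, om) *)
Definition vecP (i Om om : R) : R * R * R :=
  (cos om * cos Om - cos i * sin om * sin Om,
   cos om * sin Om + cos i * sin om * cos Om,
   sin om * sin i).
Definition vecQ (i Om om : R) : R * R * R :=
  (- sin om * cos Om - cos i * cos om * sin Om,
   - sin om * sin Om + cos i * cos om * cos Om,
   cos om * sin i).
Definition dot3 (x y : R * R * R) : R :=
  x.1.1 * y.1.1 + x.1.2 * y.1.2 + x.2 * y.2.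

Definition Kc i1 O1 w1 i2 O2 w2 := dot3 (vecP i1 O1 w1) (vecP i2 O2 w2).
Definition Lc i1 O1 w1 i2 O2 w2 := dot3 (vecQ i1 O1 w1) (vecP i2 O2 w2).
Definition Mc i1 O1 w1 i2 O2 w2 := dot3 (vecP i1 O1 w1) (vecQ i2 O2 w2).
Definition Nc i1 O1 w1 i2 O2 w2 := dot3 (vecQ i1 O1 w1) (vecQ i2 O2 w2).

Section Coeffs.
Variables (a1 e1 a2 e2 K L M N : R).
Definition lam (u2 : R) : R := a1 * e1 ^+ 2.
Definition muf (u2 : R) : R :=
  a2 * sqrt (1 - e1 ^+ 2) *
  (sqrt (1 - e2 ^+ 2) * N * sin u2 + L * cos u2 - e2 * L).
Definition nuf (u2 : R) : R :=
  a2 * e2 * K - a1 * e1 - a2 * sqrt (1 - e2 ^+ 2) * M * sin u2 - a2 * K * cos u2.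
Definition alf (u2 : R) : R :=
  a1 * (sqrt (1 - e2 ^+ 2) * M * cos u2 - K * sin u2).
Definition bef (u2 : R) : R :=
  a1 * sqrt (1 - e1 ^+ 2) * (sqrt (1 - e2 ^+ 2) * N * cos u2 - L * sin u2).
Definition gaf (u2 : R) : R :=
  a2 * e2 ^+ 2 * sin u2 * cos u2 - a1 * e1 * sqrt (1 - e2 ^+ 2) * M * cos u2
  + (a1 * e1 * K - a2 * e2) * sin u2.
End Coeffs.

Definition sylv (al be ga la mu nu : R) : 'M[R]_4 :=
  \matrix_(i < 4, j < 4)
   match nat_of_ord i, nat_of_ord j with
   | 0, 0 => al ^+ 2 + be ^+ 2 | 0, 1 => 0 | 0, 2 => - (al * la) | 0, _ => 0
   | 1, 0 => 2 * al * ga | 1, 1 => al ^+ 2 + be ^+ 2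
   | 1, 2 => be * mu - la * ga - al * nu | 1, _ => - (al * la)
   | 2, 0 => ga ^+ 2 - be ^+ 2 | 2, 1 => 2 * al * ga | 2, 2 => - (ga * nu)
   | 2, _ => be * mu - la * ga - al * nu
   | _, 0 => 0 | _, 1 => ga ^+ 2 - be ^+ 2 | _, 2 => 0 | _, _ => - (ga * nu)
   end.

Definition sylvS (a1 e1 a2 e2 K L M N u2 : R) : 'M[R]_4 :=
  sylv (alf a1 e2 K M u2) (bef a1 e1 e2 L N u2) (gaf a1 e1 a2 e2 K M u2)
       (lam a1 e1 u2) (muf e1 a2 e2 L N u2) (nuf a1 e1 a2 e2 K M u2).

Definition vars6 (al be ga la mu nu : R) (k : 'I_6) : R :=
  match nat_of_ord k with
  | 0 => al | 1 => be | 2 => ga | 3 => la | 4 => mu | _ => nu end.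

From mathcomp Require Import all_boot all_algebra.
From mathcomp Require Import Rstruct.
From mathcomp Require Import mpoly.
From Stdlib Require Import Reals.
From mathcomp Require Import ring.

(* Write [x = cos u1] and [p = al x + ga].  The two quadratics are
   [p^2 - be^2 (1 - x^2)] and [- (la x + nu) p + be mu x]: both roots of the
   first lie within [O(be)] of the root of [p], where the second is [O(be)].
   The resultant, the product of the values of the second quadratic at the
   roots of the first, is therefore [O(be^2)]; in its polynomial (Bezout)
   form the coefficients of [be^0] and [be^1] cancel identically. *)

Set Implicit Arguments.
Unset Strict Implicit.
Unset Printing Implicit Defensive.
Import GRing.Theory.
Local Open Scope ring_scope.

Section SylvesterQuadratic.
Variable T : comNzRingType.

Definition sylvester2 (a b c d e f : T) : 'M[T]_4 :=
  \matrix_(i < 4, j < 4)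
   match nat_of_ord i, nat_of_ord j with
   | 0, 0 | 1, 1 => a | 1, 0 | 2, 1 => b | 2, 0 | 3, 1 => c
   | 0, 2 | 1, 3 => d | 1, 2 | 2, 3 => e | 2, 2 | 3, 3 => f
   | _, _ => 0
   end.

Definition resultant2 (a b c d e f : T) : T :=
  (a * f - c * d) ^+ 2 - (a * e - b * d) * (b * f - c * e).

Lemma det_sylvester2 a b c d e f :
  \det (sylvester2 a b c d e f) = resultant2 a b c d e f.
Proof.
do 3! rewrite !(expand_det_row _ ord0) !big_ord_recl !big_ord0 /cofactor.
by rewrite !det_mx11 !mxE /= /resultant2; ring.
Qed.

Definition sylv_cofactor (al be ga la mu nu : T) : T :=
  let w := ga * la - al * nu in
  let s := al * la + ga * nu in
  let e := be * mu - la * ga - al * nu in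
  al ^+ 2 * ga ^+ 2 * mu ^+ 2 - 2 * al * ga * w * s
  - e * (al ^+ 2 * (w + be * mu) + ga ^+ 2 * (w - be * mu))
  + be ^+ 2 * (s ^+ 2 - e ^+ 2).

Lemma resultant2_sylv al be ga la mu nu :
  resultant2 (al ^+ 2 + be ^+ 2) (2 * al * ga) (ga ^+ 2 - be ^+ 2)
    (- (al * la)) (be * mu - la * ga - al * nu) (- (ga * nu)) =
  be ^+ 2 * sylv_cofactor al be ga la mu nu.
Proof. by rewrite /resultant2 /sylv_cofactor; ring. Qed.

End SylvesterQuadratic.

Lemma rmorph_sylv_cofactor (T U : comNzRingType) (phi : {rmorphism T -> U})
    al be ga la mu nu :
  phi (sylv_cofactor al be ga la mu nu) =
  sylv_cofactor (phi al) (phi be) (phi ga) (phi la) (phi mu) (phi nu).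
Proof.
rewrite /sylv_cofactor /=.
by rewrite !(rmorphXn, rmorph_nat, rmorphD, rmorphB, rmorphN, rmorphM).
Qed.

Lemma sylvE al be ga la mu nu :
  sylv al be ga la mu nu =
  sylvester2 (al ^+ 2 + be ^+ 2) (2 * al * ga) (ga ^+ 2 - be ^+ 2)
    (- (al * la)) (be * mu - la * ga - al * nu) (- (ga * nu)).
Proof.
apply/matrixP => i j; rewrite !mxE.
by case: i j => [[|[|[|[|i]]]] +] [[|[|[|[|j]]]] +].
Qed.

Definition sylv_cofactor_mpoly : {mpoly R[6]} :=
  sylv_cofactor 'X_(inord 0) 'X_(inord 1) 'X_(inord 2)
                'X_(inord 3) 'X_(inord 4) 'X_(inord 5).

Lemma meval_sylv_cofactor_mpoly al be ga la mu nu :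
  sylv_cofactor_mpoly.@[vars6 al be ga la mu nu] =
  sylv_cofactor al be ga la mu nu.
Proof. by rewrite rmorph_sylv_cofactor /= !mevalXU /vars6 !inordK. Qed.

Lemma det_sylv al be ga la mu nu :
  \det (sylv al be ga la mu nu) =
  be ^+ 2 * sylv_cofactor_mpoly.@[vars6 al be ga la mu nu].
Proof.
by rewrite sylvE det_sylvester2 resultant2_sylv meval_sylv_cofactor_mpoly.
Qed.

Theorem mainTheorem1 (a1 a2 e1 e2 i1 i2 Om1 Om2 om1 om2 : R) :
  0 < a1 -> 0 < a2 -> 0 <= e1 < 1 -> 0 <= e2 < 1 ->
  let K := Kc i1 Om1 om1 i2 Om2 om2 in
  let L := Lc i1 Om1 om1 i2 Om2 om2 in
  let M := Mc i1 Om1 om1 i2 Om2 om2 in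
  let N := Nc i1 Om1 om1 i2 Om2 om2 in
  exists P : {mpoly R[6]}, forall u2 : R,
    \det (sylvS a1 e1 a2 e2 K L M N u2) =
    (bef a1 e1 e2 L N u2) ^+ 2 *
    P.@[vars6 (alf a1 e2 K M u2) (bef a1 e1 e2 L N u2) (gaf a1 e1 a2 e2 K M u2)
              (lam a1 e1 u2) (muf e1 a2 e2 L N u2) (nuf a1 e1 a2 e2 K M u2)].
Proof.
move=> _ _ _ _ K L M N; exists sylv_cofactor_mpoly => u2.
exact: det_sylv.
Qed.
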